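(* Let $T:\mathrm{PSym}(3)\to\mathrm{Sym}(3)$ be continuous and isotropic (i.e. $T(Q^TUQ)=Q^TT(U)Q$ for all $Q\in\mathrm O(3)$, $U\in\mathrm{PSym}(3)$), such that $T(U)=0$ holds if and only if $U=\mathbb 1$, and such that $T(U_1U_2)=T(U_1)+T(U_2)$ for all commuting $U_1,U_2\in\mathrm{PSym}(3)$. Then there exist constants $G,\Lambda\in\mathbb R$ with $G\neq0$ and $3\Lambda+2G\neq0$ such that $$T(U)=2G\,\log U+\Lambda\,\mathrm{tr}(\log U)\,\mathbb 1\quad\text{for all }U\in\mathrm{PSym}(3),$$ equivalently constants $G,K\in\mathbb R\setminus\{0\}$ with $T(U)=2G\,\mathrm{dev}_3\log U+K\,\mathrm{tr}(\log U)\,\mathbb 1$.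
   Context: $\mathrm{Sym}(3)$: real symmetric $3\times3$ matrices; $\mathrm{PSym}(3)$: symmetric positive definite ones; $\mathbb 1$: identity; $\mathrm O(3)$: orthogonal group; $\log$: principal matrix logarithm $\mathrm{PSym}(3)\to\mathrm{Sym}(3)$; $\mathrm{dev}_3X=X-\tfrac13\mathrm{tr}(X)\mathbb 1$. *)

From Stdlib Require Import Reals ClassicalEpsilon.
Open Scope R_scope.

Inductive I3 : Type := i0 | i1 | i2.

Definition I3_eqb (i j : I3) : bool :=
  match i, j with
  | i0, i0 | i1, i1 | i2, i2 => true
  | _, _ => false
  end.

Definition Mat3 : Type := I3 -> I3 -> R.

Definition sum3 (f : I3 -> R) : R := f i0 + f i1 + f i2.

Definition mzero : Mat3 := fun _ _ => 0.
Definition mid : Mat3 := fun i j => if I3_eqb i j then 1 else 0.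
Definition madd (A B : Mat3) : Mat3 := fun i j => A i j + B i j.
Definition mscal (c : R) (A : Mat3) : Mat3 := fun i j => c * A i j.
Definition mmul (A B : Mat3) : Mat3 := fun i j => sum3 (fun k => A i k * B k j).
Definition mtr (A : Mat3) : Mat3 := fun i j => A j i.
Definition trace (A : Mat3) : R := A i0 i0 + A i1 i1 + A i2 i2.
Definition diag3 (d : I3 -> R) : Mat3 := fun i j => if I3_eqb i j then d i else 0.

(* distance: sum of absolute entrywise differences (all norms equivalent) *)
Definition mdist (A B : Mat3) : R := sum3 (fun i => sum3 (fun j => Rabs (A i j - B i j))).

Definition Sym3 (A : Mat3) : Prop := forall i j, A i j = A j i.
Definition PSym3 (A : Mat3) : Prop :=
  Sym3 A /\
  forall x : I3 -> R, (exists i, x i <> 0) ->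
    0 < sum3 (fun i => sum3 (fun j => x i * A i j * x j)).
Definition Orth3 (Q : Mat3) : Prop := mmul (mtr Q) Q = mid.

Definition dev3 (X : Mat3) : Mat3 := madd X (mscal (- (trace X / 3)) mid).

Definition is_logm (U L : Mat3) : Prop :=
  exists (Q : Mat3) (d : I3 -> R),
    Orth3 Q /\ (forall i, 0 < d i) /\
    U = mmul (mtr Q) (mmul (diag3 d) Q) /\
    L = mmul (mtr Q) (mmul (diag3 (fun i => ln (d i))) Q).

Definition logm (U : Mat3) : Mat3 :=
  epsilon (inhabits mzero) (is_logm U).

Definition cont_on_PSym (T : Mat3 -> Mat3) : Prop :=
  forall U, PSym3 U -> forall eps, 0 < eps ->
    exists delta, 0 < delta /\
      forall V, PSym3 V -> mdist V U < delta -> mdist (T V) (T U) < eps.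

(* Conjugation by the reflections diag(-1,1,1), diag(1,-1,1) shows that T maps
   diagonal matrices to diagonal ones, and conjugation by coordinate swaps reduces
   T(diag(e^x0, e^x1, e^x2)) to the two functions a(t) = T(diag(e^t,1,1))_00 and
   b(t) = T(diag(e^t,1,1))_11.  Additivity on commuting matrices splits T over the
   three coordinates and makes a and b additive; being continuous, they are linear
   (Cauchy).  Hence T(D) = al log D + be tr(log D) 1 for positive diagonal D, and the
   spectral theorem together with isotropy carries this over to all of PSym(3).
   Since T vanishes only at 1, evaluating at diag(e, 1/e, 1) and at e 1 gives
   al <> 0 and 3 be + al <> 0; then G = al/2, Lam = be and K = be + al/3. *)

From Stdlib Require Import Reals Lra Psatz Nsatz ZArith.
From Stdlib Require Import FunctionalExtensionality Classical ClassicalEpsilon.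
Open Scope R_scope.

(** * Matrix algebra *)

Lemma mat_ext (A B : Mat3) : (forall i j, A i j = B i j) -> A = B.
Proof.
  intros H. apply functional_extensionality; intro i.
  apply functional_extensionality; intro j. apply H.
Qed.

Ltac mat_ring :=
  apply mat_ext; intros [] [];
  unfold mmul, mtr, madd, mscal, mid, diag3, sum3, mzero, dev3, trace; simpl; ring.

Lemma mmul_assoc A B C : mmul A (mmul B C) = mmul (mmul A B) C.
Proof. mat_ring. Qed.
Lemma mtr_mmul A B : mtr (mmul A B) = mmul (mtr B) (mtr A).
Proof. mat_ring. Qed.
Lemma mtr_involutive A : mtr (mtr A) = A.
Proof. mat_ring. Qed.
Lemma mmul_1_l A : mmul mid A = A.
Proof. mat_ring. Qed.
Lemma mmul_1_r A : mmul A mid = A.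
Proof. mat_ring. Qed.
Lemma mmul_mscal_l c A B : mmul (mscal c A) B = mscal c (mmul A B).
Proof. mat_ring. Qed.
Lemma mscal_mscal a b A : mscal a (mscal b A) = mscal (a * b) A.
Proof. mat_ring. Qed.
Lemma mscal_1 A : mscal 1 A = A.
Proof. mat_ring. Qed.

Definition det3 (M : Mat3) : R :=
  M i0 i0 * (M i1 i1 * M i2 i2 - M i1 i2 * M i2 i1)
  - M i0 i1 * (M i1 i0 * M i2 i2 - M i1 i2 * M i2 i0)
  + M i0 i2 * (M i1 i0 * M i2 i1 - M i1 i1 * M i2 i0).

Lemma det3_mmul A B : det3 (mmul A B) = det3 A * det3 B.
Proof. unfold det3, mmul, sum3; ring. Qed.

Lemma det3_mid : det3 mid = 1.
Proof. unfold det3, mid; simpl; ring. Qed.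

Definition adj3 (M : Mat3) : Mat3 := fun i j =>
  match j, i with
  | i0, i0 => M i1 i1 * M i2 i2 - M i1 i2 * M i2 i1
  | i0, i1 => - (M i1 i0 * M i2 i2 - M i1 i2 * M i2 i0)
  | i0, i2 => M i1 i0 * M i2 i1 - M i1 i1 * M i2 i0
  | i1, i0 => - (M i0 i1 * M i2 i2 - M i0 i2 * M i2 i1)
  | i1, i1 => M i0 i0 * M i2 i2 - M i0 i2 * M i2 i0
  | i1, i2 => - (M i0 i0 * M i2 i1 - M i0 i1 * M i2 i0)
  | i2, i0 => M i0 i1 * M i1 i2 - M i0 i2 * M i1 i1
  | i2, i1 => - (M i0 i0 * M i1 i2 - M i0 i2 * M i1 i0)
  | i2, i2 => M i0 i0 * M i1 i1 - M i0 i1 * M i1 i0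
  end.

Lemma mmul_adj3_l M : mmul (adj3 M) M = mscal (det3 M) mid.
Proof. apply mat_ext; intros [] []; unfold mmul, adj3, mscal, mid, det3, sum3; simpl; ring. Qed.

Lemma mmul_eq_mid_comm A B : mmul A B = mid -> mmul B A = mid.
Proof.
  intros H.
  assert (Hdet : det3 A * det3 B = 1) by (rewrite <- det3_mmul, H; apply det3_mid).
  assert (HA : det3 A <> 0) by (intro E; rewrite E in Hdet; lra).
  assert (HB : B = mscal (/ det3 A) (adj3 A)).
  { transitivity (mscal (/ det3 A) (mmul (mmul (adj3 A) A) B)).
    - rewrite mmul_adj3_l, mmul_mscal_l, mmul_1_l, mscal_mscal, Rinv_l by exact HA.
      now rewrite mscal_1.
    - now rewrite <- mmul_assoc, H, mmul_1_r. }
  rewrite HB, mmul_mscal_l, mmul_adj3_l, mscal_mscal, Rinv_l by exact HA.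
  apply mscal_1.
Qed.

Lemma Orth3_mmul_mtr Q : Orth3 Q -> mmul Q (mtr Q) = mid.
Proof. apply mmul_eq_mid_comm. Qed.

Lemma Orth3_mmul P Q : Orth3 P -> Orth3 Q -> Orth3 (mmul P Q).
Proof.
  unfold Orth3. intros HP HQ.
  rewrite mtr_mmul, <- mmul_assoc, (mmul_assoc (mtr P)), HP, mmul_1_l. exact HQ.
Qed.

Lemma Sym3_mtr A : Sym3 A -> mtr A = A.
Proof. intros H; apply mat_ext; intros i j; apply H. Qed.

Lemma mtr_Sym3 A : mtr A = A -> Sym3 A.
Proof. intros H i j. change (A i j = mtr A i j). now rewrite H. Qed.

Lemma Sym3_conj P A : Sym3 A -> Sym3 (mmul P (mmul A (mtr P))).
Proof.
  intros H. apply mtr_Sym3.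
  rewrite !mtr_mmul, mtr_involutive, Sym3_mtr by exact H. symmetry; apply mmul_assoc.
Qed.

Lemma trace_conj Q M : Orth3 Q -> trace (mmul (mtr Q) (mmul M Q)) = trace M.
Proof.
  intros HQ. transitivity (trace (mmul M (mmul Q (mtr Q)))).
  - unfold trace, mmul, mtr, sum3; ring.
  - now rewrite Orth3_mmul_mtr, mmul_1_r.
Qed.

Lemma entry_le_mdist A B i j : Rabs (A i j - B i j) <= mdist A B.
Proof.
  unfold mdist, sum3.
  assert (H : forall k l, 0 <= Rabs (A k l - B k l)) by (intros; apply Rabs_pos).
  pose proof (H i0 i0); pose proof (H i0 i1); pose proof (H i0 i2);
  pose proof (H i1 i0); pose proof (H i1 i1); pose proof (H i1 i2);
  pose proof (H i2 i0); pose proof (H i2 i1); pose proof (H i2 i2).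
  destruct i, j; lra.
Qed.

(** * Cauchy's functional equation *)

Lemma IZR_ratio_dense x d : 0 < d -> exists z n, 0 < IZR n /\ Rabs (IZR z / IZR n - x) < d.
Proof.
  intros Hd. destruct (archimed (/ d)) as [Hn _].
  set (n := up (/ d)) in *.
  assert (Hnd : 1 < IZR n * d).
  { apply Rmult_lt_reg_r with (/ d); [now apply Rinv_0_lt_compat|].
    field_simplify; lra. }
  assert (Hn0 : 0 < IZR n) by nra.
  destruct (archimed (IZR n * x)) as [Hz1 Hz2].
  exists (up (IZR n * x)), n. split; [exact Hn0|].
  replace (IZR (up (IZR n * x)) / IZR n - x) with ((IZR (up (IZR n * x)) - IZR n * x) / IZR n)
    by (field; lra).
  rewrite Rabs_pos_eq by (apply Rlt_le, Rdiv_lt_0_compat; lra).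
  apply Rmult_lt_reg_r with (IZR n); [exact Hn0|].
  field_simplify; lra.
Qed.

Section Cauchy.
Variable f : R -> R.
Hypothesis f_additive : forall x y, f (x + y) = f x + f y.

Lemma additive_0 : f 0 = 0.
Proof. pose proof (f_additive 0 0) as H. rewrite Rplus_0_r in H. lra. Qed.

Lemma additive_IZR_mul z x : f (IZR z * x) = IZR z * f x.
Proof.
  induction z using Z.peano_ind.
  - rewrite Rmult_0_l, additive_0. ring.
  - rewrite succ_IZR, Rmult_plus_distr_r, Rmult_1_l, f_additive, IHz. ring.
  - rewrite <- Z.sub_1_r, minus_IZR. pose proof (f_additive ((IZR z - 1) * x) x) as H.
    replace ((IZR z - 1) * x + x) with (IZR z * x) in H by ring. lra.
Qed.

Lemma additive_rational z n : IZR n <> 0 -> f (IZR z / IZR n) = f 1 * (IZR z / IZR n).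
Proof.
  intros Hn. apply Rmult_eq_reg_l with (IZR n); [|exact Hn].
  rewrite <- additive_IZR_mul.
  replace (IZR n * (IZR z / IZR n)) with (IZR z * 1) by (field; exact Hn).
  rewrite additive_IZR_mul. field. exact Hn.
Qed.

Hypothesis f_continuous : forall x eps, 0 < eps ->
  exists d, 0 < d /\ forall y, Rabs (y - x) < d -> Rabs (f y - f x) < eps.

Lemma additive_continuous_linear x : f x = f 1 * x.
Proof.
  apply NNPP; intro Hne.
  set (e := Rabs (f x - f 1 * x)).
  assert (He : 0 < e) by (apply Rabs_pos_lt; lra).
  destruct (f_continuous x (e / 2)) as [d [Hd Hfd]]; [lra|].
  assert (Hk : 0 < Rabs (f 1) + 1) by (pose proof (Rabs_pos (f 1)); lra).
  destruct (IZR_ratio_dense x (Rmin d (e / 2 / (Rabs (f 1) + 1)))) as [z [n [Hn Hr]]].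
  { apply Rmin_glb_lt; [lra|]. apply Rdiv_lt_0_compat; lra. }
  set (r := IZR z / IZR n) in *.
  specialize (Hfd r (Rlt_le_trans _ _ _ Hr (Rmin_l _ _))).
  unfold r in Hfd; rewrite additive_rational in Hfd by lra; fold r in Hfd.
  assert (Hlin : Rabs (f 1 * (r - x)) < e / 2).
  { rewrite Rabs_mult.
    assert (Hr2 := Rlt_le_trans _ _ _ Hr (Rmin_r _ _)).
    apply Rmult_lt_compat_r with (r := Rabs (f 1) + 1) in Hr2; [|exact Hk].
    replace (e / 2 / (Rabs (f 1) + 1) * (Rabs (f 1) + 1)) with (e / 2) in Hr2 by (field; lra).
    pose proof (Rabs_pos (r - x)). nra. }
  assert (Htri := Rabs_triang (f 1 * (r - x)) (-(f 1 * r - f x))).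
  rewrite Rabs_Ropp in Htri.
  replace (f 1 * (r - x) + - (f 1 * r - f x)) with (f x - f 1 * x) in Htri by ring.
  fold e in Htri. lra.
Qed.

End Cauchy.

(** * Spectral theorem for symmetric matrices *)

Definition mv (M : Mat3) (v : I3 -> R) (i : I3) : R := sum3 (fun k => M i k * v k).
Definition dot (u v : I3 -> R) : R := sum3 (fun k => u k * v k).
Definition nonzero (v : I3 -> R) : Prop := exists i, v i <> 0.
Definition basis (k : I3) : I3 -> R := fun i => if I3_eqb k i then 1 else 0.
Definition cross (a b : I3 -> R) : I3 -> R := fun i =>
  match i with
  | i0 => a i1 * b i2 - a i2 * b i1
  | i1 => a i2 * b i0 - a i0 * b i2
  | i2 => a i0 * b i1 - a i1 * b i0
  end.
Definition rows3 (a b c : I3 -> R) : Mat3 := fun i j =>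
  match i with i0 => a j | i1 => b j | i2 => c j end.

Lemma cubic_has_root a2 a1 a0 : exists x, x * x * x - a2 * x * x - a1 * x - a0 = 0.
Proof.
  set (f := fun x => x * x * x - a2 * x * x - a1 * x - a0).
  assert (Hf : continuity f) by (unfold f; reg).
  set (M := 1 + Rabs a2 + Rabs a1 + Rabs a0).
  pose proof (Rabs_pos a2); pose proof (Rabs_pos a1); pose proof (Rabs_pos a0).
  pose proof (Rle_abs a2); pose proof (Rle_abs a1); pose proof (Rle_abs a0).
  pose proof (Rle_abs (- a2)); pose proof (Rle_abs (- a1)); pose proof (Rle_abs (- a0)).
  rewrite !Rabs_Ropp in *.
  assert (HM : 1 <= M) by (unfold M; lra).
  assert (HM2 : M <= M * M) by nra.
  assert (HMM : M * M * M - (Rabs a2 + Rabs a1 + Rabs a0) * (M * M) = M * M)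
    by (unfold M; ring).
  assert (Hpos : 0 < f M).
  { unfold f.
    assert (a2 * M * M <= Rabs a2 * (M * M)) by nra.
    assert (a1 * M <= Rabs a1 * (M * M)) by nra.
    assert (a0 <= Rabs a0 * (M * M)) by nra.
    nra. }
  assert (Hneg : f (- M) < 0).
  { unfold f.
    assert (- a2 * (- M) * (- M) <= Rabs a2 * (M * M)) by nra.
    assert (- a1 * (- M) <= Rabs a1 * (M * M)) by nra.
    assert (- a0 <= Rabs a0 * (M * M)) by nra.
    nra. }
  destruct (IVT f (- M) M Hf) as [x [_ Hx]]; [lra | lra | lra |].
  now exists x.
Qed.

Lemma nonzero_cases (P : Prop) (v : I3 -> R) :
  (nonzero v -> P) -> (v i0 = 0 -> v i1 = 0 -> v i2 = 0 -> P) -> P.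
Proof.
  intros Hnz Hz. destruct (classic (nonzero v)) as [H | H]; [auto|].
  apply Hz; apply NNPP; intro Hn; apply H; eexists; exact Hn.
Qed.

Ltac try_kernel_vector c :=
  apply (nonzero_cases _ c);
  [ intro; exists c; split; [assumption|];
    intros []; unfold mv, sum3, cross, basis in *; simpl in *; nsatz
  | intros ? ? ? ].

(* When det M = 0, the first nonzero vector among the cross products of two
   rows, or of a row with a basis vector, is orthogonal to all rows; if they
   all vanish, then M = 0. *)
Lemma det3_eq0_kernel M : det3 M = 0 -> exists v, nonzero v /\ forall i, mv M v i = 0.
Proof.
  intros Hd. unfold det3 in Hd.
  try_kernel_vector (cross (M i0) (M i1)).
  try_kernel_vector (cross (M i0) (M i2)).
  try_kernel_vector (cross (M i1) (M i2)).
  try_kernel_vector (cross (M i0) (basis i0)).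
  try_kernel_vector (cross (M i0) (basis i1)).
  try_kernel_vector (cross (M i1) (basis i0)).
  try_kernel_vector (cross (M i1) (basis i1)).
  try_kernel_vector (cross (M i2) (basis i0)).
  try_kernel_vector (cross (M i2) (basis i1)).
  exists (basis i0). split; [exists i0; simpl; apply R1_neq_R0|].
  unfold cross, basis in *; simpl in *.
  intros []; unfold mv, sum3, basis; simpl; nsatz.
Qed.

Lemma nonzero_dot_pos v : nonzero v -> 0 < dot v v.
Proof.
  intros [i Hi]. unfold dot, sum3.
  pose proof (Rle_0_sqr (v i0)); pose proof (Rle_0_sqr (v i1)); pose proof (Rle_0_sqr (v i2)).
  pose proof (Rsqr_pos_lt _ Hi). unfold Rsqr in *. destruct i; lra.
Qed.

Lemma nonzero_unit_multiple v : nonzero v ->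
  exists w c, dot w w = 1 /\ c <> 0 /\ forall i, v i = c * w i.
Proof.
  intros Hv. pose proof (nonzero_dot_pos v Hv) as Hp.
  set (s := sqrt (dot v v)).
  assert (Hs : 0 < s) by (apply sqrt_lt_R0; exact Hp).
  assert (Hss : s * s = dot v v) by (apply sqrt_sqrt; lra).
  exists (fun i => v i / s), s. repeat split.
  - transitivity (dot v v / (s * s)); [unfold dot, sum3; field; lra|].
    rewrite <- Hss. field. lra.
  - lra.
  - intro i. field. lra.
Qed.

(* [lam] is a real root of the characteristic polynomial of [A]. *)
Lemma exists_unit_eigenvector A : exists lam v, dot v v = 1 /\ forall i, mv A v i = lam * v i.
Proof.
  destruct (cubic_has_root (trace A)
     (- ((A i1 i1 * A i2 i2 - A i1 i2 * A i2 i1) + (A i0 i0 * A i2 i2 - A i0 i2 * A i2 i0)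
         + (A i0 i0 * A i1 i1 - A i0 i1 * A i1 i0))) (det3 A)) as [lam Hlam].
  destruct (det3_eq0_kernel (madd A (mscal (- lam) mid))) as [v [Hv Hker]].
  { unfold det3, madd, mscal, mid, trace in *; simpl. lra. }
  destruct (nonzero_unit_multiple v Hv) as [w [c [Hw [Hc Hvw]]]].
  exists lam, w. split; [exact Hw|].
  intro i. specialize (Hker i). unfold mv, sum3, madd, mscal, mid in *.
  rewrite !Hvw in Hker. apply Rmult_eq_reg_l with c; [|exact Hc].
  destruct i; simpl in *; lra.
Qed.

Lemma exists_unit_orthogonal v : exists w, dot w w = 1 /\ dot v w = 0.
Proof.
  assert (Hw : exists w, nonzero w /\ dot v w = 0).
  { destruct (classic (v i1 = 0 /\ v i2 = 0)) as [[H1 H2] | H].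
    - exists (basis i1). split; [exists i1; simpl; apply R1_neq_R0|].
      unfold dot, sum3, basis; simpl. rewrite H1; ring.
    - exists (fun i => match i with i0 => 0 | i1 => v i2 | i2 => - v i1 end). split.
      + apply (nonzero_cases _ v); [|tauto].
        intros _. apply NNPP; intro Hn; apply H.
        split; apply NNPP; intro Hi; apply Hn; [exists i2 | exists i1]; simpl; lra.
      + unfold dot, sum3; simpl; ring. }
  destruct Hw as [w0 [Hnz Ho]].
  destruct (nonzero_unit_multiple w0 Hnz) as [w [c [Hw [Hc Hcw]]]].
  exists w. split; [exact Hw|].
  unfold dot, sum3 in *. rewrite !Hcw in Ho.
  apply Rmult_eq_reg_l with c; [|exact Hc]. lra.
Qed.

Lemma orthonormal_completion v : dot v v = 1 ->
  exists P, Orth3 P /\ forall j, P i0 j = v j.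
Proof.
  intros Hv. destruct (exists_unit_orthogonal v) as [w [Hw Hvw]].
  exists (rows3 v w (cross v w)). split; [|reflexivity].
  apply mmul_eq_mid_comm.
  unfold dot, sum3 in *. apply mat_ext; intros [] [];
    unfold mmul, mtr, rows3, mid, sum3, cross; simpl; nsatz.
Qed.

(* [(c, s)] is the normalized eigenvector [(q, m - p)] of [[p, q], [q, r]] for
   its larger eigenvalue [m]. *)
Lemma jacobi_rotation p q r :
  exists c s, c * c + s * s = 1 /\ - c * s * p + (c * c - s * s) * q + c * s * r = 0.
Proof.
  destruct (Req_dec q 0) as [Hq | Hq].
  { exists 1, 0. split; [ring|]. rewrite Hq; ring. }
  set (D := sqrt (((p - r) / 2) * ((p - r) / 2) + q * q)).
  assert (HD : D * D = ((p - r) / 2) * ((p - r) / 2) + q * q).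
  { apply sqrt_sqrt. pose proof (Rle_0_sqr ((p - r) / 2)); pose proof (Rle_0_sqr q).
    unfold Rsqr in *; lra. }
  set (m := (p + r) / 2 + D).
  assert (Hm : (m - p) * (m - r) = q * q) by (unfold m; nra).
  assert (Hn0 : 0 < q * q + (m - p) * (m - p)).
  { pose proof (Rsqr_pos_lt _ Hq); pose proof (Rle_0_sqr (m - p)). unfold Rsqr in *; lra. }
  set (n := sqrt (q * q + (m - p) * (m - p))).
  assert (Hn : n * n = q * q + (m - p) * (m - p)) by (apply sqrt_sqrt; lra).
  assert (Hnpos : 0 < n) by (apply sqrt_lt_R0; lra).
  exists (q / n), ((m - p) / n). split.
  - transitivity ((q * q + (m - p) * (m - p)) / (n * n)); [field; lra|].
    rewrite <- Hn. field. lra.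
  - transitivity ((q * (q * q - (m - p) * (m - r))) / (n * n)); [field; lra|].
    rewrite Hm. field. lra.
Qed.

Definition rot12 (c s : R) : Mat3 := fun i j =>
  match i, j with
  | i0, i0 => 1 | i1, i1 => c | i1, i2 => s | i2, i1 => - s | i2, i2 => c | _, _ => 0
  end.

Lemma rot12_Orth3 c s : c * c + s * s = 1 -> Orth3 (rot12 c s).
Proof.
  intros H. unfold Orth3. apply mat_ext; intros [] [];
    unfold rot12, mmul, mtr, mid, sum3; simpl; nsatz.
Qed.

Lemma Sym3_block_diagonalize B : Sym3 B -> B i1 i0 = 0 -> B i2 i0 = 0 ->
  exists Q d, Orth3 Q /\ mmul Q (mmul B (mtr Q)) = diag3 d.
Proof.
  intros HB H10 H20.
  destruct (jacobi_rotation (B i1 i1) (B i1 i2) (B i2 i2)) as [c [s [Hcs Hr]]].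
  exists (rot12 c s), (fun i => mmul (rot12 c s) (mmul B (mtr (rot12 c s))) i i).
  split; [now apply rot12_Orth3|].
  assert (H01 : B i0 i1 = 0) by (rewrite HB; exact H10).
  assert (H02 : B i0 i2 = 0) by (rewrite HB; exact H20).
  assert (H21 : B i2 i1 = B i1 i2) by apply HB.
  apply mat_ext; intros [] []; unfold diag3; simpl; try reflexivity;
    unfold rot12, mmul, mtr, sum3; simpl; rewrite ?H01, ?H02, ?H10, ?H20, ?H21; try ring;
    (etransitivity; [|exact Hr]; ring).
Qed.

Lemma eigenvector_deflation A P v lam : Orth3 P -> (forall j, P i0 j = v j) ->
  (forall i, mv A v i = lam * v i) ->
  forall j, mmul P (mmul A (mtr P)) j i0 = lam * mid j i0.
Proof.
  intros HP HPv Hv j. rewrite <- (Orth3_mmul_mtr P HP).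
  unfold mv, sum3 in Hv.
  pose proof (Hv i0); pose proof (Hv i1); pose proof (Hv i2).
  rewrite <- !HPv in *.
  destruct j; unfold mv, mmul, mtr, sum3 in *; simpl in *; nsatz.
Qed.

Lemma mtr_conj_cancel Q A : Orth3 Q -> mmul (mtr Q) (mmul (mmul Q (mmul A (mtr Q))) Q) = A.
Proof.
  intros HQ. rewrite !mmul_assoc, HQ, mmul_1_l, <- mmul_assoc, HQ. apply mmul_1_r.
Qed.

Lemma Sym3_spectral A : Sym3 A ->
  exists Q d, Orth3 Q /\ A = mmul (mtr Q) (mmul (diag3 d) Q).
Proof.
  intros HA.
  destruct (exists_unit_eigenvector A) as [lam [v [Hv Hav]]].
  destruct (orthonormal_completion v Hv) as [P [HP HPv]].
  set (B := mmul P (mmul A (mtr P))).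
  assert (HB0 := eigenvector_deflation A P v lam HP HPv Hav).
  destruct (Sym3_block_diagonalize B (Sym3_conj P A HA)) as [R [d [HR HRB]]].
  { rewrite HB0; unfold mid; simpl; ring. }
  { rewrite HB0; unfold mid; simpl; ring. }
  exists (mmul R P), d. split; [now apply Orth3_mmul|].
  rewrite <- HRB, mtr_mmul.
  transitivity (mmul (mtr P) (mmul (mmul (mtr R) (mmul (mmul R (mmul B (mtr R))) R)) P)).
  - rewrite mtr_conj_cancel by exact HR. unfold B. now rewrite mtr_conj_cancel.
  - now rewrite !mmul_assoc.
Qed.

Lemma Orth3_row_nonzero Q i : Orth3 Q -> nonzero (Q i).
Proof.
  intros HQ. apply (nonzero_cases _ (Q i)); [tauto|]. intros H0 H1 H2.
  assert (Hii : mmul Q (mtr Q) i i = 1) by (rewrite Orth3_mmul_mtr by exact HQ; now destruct i).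
  unfold mmul, mtr, sum3 in Hii. rewrite H0, H1, H2 in Hii. lra.
Qed.

Lemma PSym3_spectral U : PSym3 U ->
  exists Q d, Orth3 Q /\ (forall i, 0 < d i) /\ U = mmul (mtr Q) (mmul (diag3 d) Q).
Proof.
  intros [HS Hpos]. destruct (Sym3_spectral U HS) as [Q [d [HQ HU]]].
  exists Q, d. split; [exact HQ|]. split; [|exact HU].
  intro i.
  assert (HD : mmul Q (mmul U (mtr Q)) = diag3 d).
  { rewrite HU, !mmul_assoc, Orth3_mmul_mtr, mmul_1_l, <- !mmul_assoc, Orth3_mmul_mtr by exact HQ.
    apply mmul_1_r. }
  replace (d i) with (mmul Q (mmul U (mtr Q)) i i) by (rewrite HD; now destruct i).
  specialize (Hpos (Q i) (Orth3_row_nonzero Q i HQ)).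
  unfold mmul, mtr, sum3 in *. lra.
Qed.

Lemma PSym3_diag d : (forall i, 0 < d i) -> PSym3 (diag3 d).
Proof.
  intros Hd. split; [intros [] []; reflexivity|].
  intros x [i Hi]. unfold sum3, diag3; simpl.
  pose proof (Hd i0); pose proof (Hd i1); pose proof (Hd i2).
  assert (0 <= x i0 * x i0) by nra. assert (0 <= x i1 * x i1) by nra.
  assert (0 <= x i2 * x i2) by nra. pose proof (Rsqr_pos_lt _ Hi). unfold Rsqr in *.
  destruct i; nra.
Qed.

Lemma logm_spec U : PSym3 U -> is_logm U (logm U).
Proof.
  intros HU. unfold logm. apply epsilon_spec.
  destruct (PSym3_spectral U HU) as [Q [d [HQ [Hd E]]]].
  exists (mmul (mtr Q) (mmul (diag3 (fun i => ln (d i))) Q)), Q, d. auto.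
Qed.

(** * Isotropic additive functions *)

Definition dg (a b c : R) : Mat3 :=
  diag3 (fun i => match i with i0 => a | i1 => b | i2 => c end).

Lemma PSym3_dg a b c : 0 < a -> 0 < b -> 0 < c -> PSym3 (dg a b c).
Proof. intros; apply PSym3_diag; intros []; assumption. Qed.

Lemma dg_mmul a b c a' b' c' : mmul (dg a b c) (dg a' b' c') = dg (a * a') (b * b') (c * c').
Proof. unfold dg; mat_ring. Qed.

Definition refl0 : Mat3 := dg (-1) 1 1.
Definition refl1 : Mat3 := dg 1 (-1) 1.
Definition swap01 : Mat3 := fun i j =>
  match i, j with i0, i1 | i1, i0 | i2, i2 => 1 | _, _ => 0 end.
Definition swap12 : Mat3 := fun i j =>
  match i, j with i0, i0 | i1, i2 | i2, i1 => 1 | _, _ => 0 end.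

Lemma refl0_Orth3 : Orth3 refl0. Proof. unfold Orth3, refl0, dg; mat_ring. Qed.
Lemma refl1_Orth3 : Orth3 refl1. Proof. unfold Orth3, refl1, dg; mat_ring. Qed.
Lemma swap01_Orth3 : Orth3 swap01. Proof. unfold Orth3, swap01; mat_ring. Qed.
Lemma swap12_Orth3 : Orth3 swap12. Proof. unfold Orth3, swap12; mat_ring. Qed.

Lemma refl0_conj_dg a b c : mmul (mtr refl0) (mmul (dg a b c) refl0) = dg a b c.
Proof. unfold refl0, dg; mat_ring. Qed.
Lemma refl1_conj_dg a b c : mmul (mtr refl1) (mmul (dg a b c) refl1) = dg a b c.
Proof. unfold refl1, dg; mat_ring. Qed.
Lemma swap01_conj_dg a b c : mmul (mtr swap01) (mmul (dg a b c) swap01) = dg b a c.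
Proof. unfold swap01, dg; mat_ring. Qed.
Lemma swap12_conj_dg a b c : mmul (mtr swap12) (mmul (dg a b c) swap12) = dg a c b.
Proof. unfold swap12, dg; mat_ring. Qed.

Definition iso_lin (al be : R) (L : Mat3) : Mat3 := madd (mscal al L) (mscal (be * trace L) mid).

Lemma iso_lin_conj al be Q L : Orth3 Q ->
  mmul (mtr Q) (mmul (iso_lin al be L) Q) = iso_lin al be (mmul (mtr Q) (mmul L Q)).
Proof.
  intros HQ. unfold iso_lin. rewrite trace_conj by exact HQ.
  transitivity (madd (mscal al (mmul (mtr Q) (mmul L Q))) (mscal (be * trace L) (mmul (mtr Q) Q)));
    [mat_ring|].
  now rewrite HQ.
Qed.

Section Isotropic.
Variable T : Mat3 -> Mat3.
Hypothesis T_cont : cont_on_PSym T.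
Hypothesis T_iso : forall Q U, Orth3 Q -> PSym3 U ->
  T (mmul (mtr Q) (mmul U Q)) = mmul (mtr Q) (mmul (T U) Q).
Hypothesis T_add : forall U1 U2, PSym3 U1 -> PSym3 U2 -> mmul U1 U2 = mmul U2 U1 ->
  T (mmul U1 U2) = madd (T U1) (T U2).

Lemma T_dg_diagonal a b c : 0 < a -> 0 < b -> 0 < c ->
  T (dg a b c) = dg (T (dg a b c) i0 i0) (T (dg a b c) i1 i1) (T (dg a b c) i2 i2).
Proof.
  intros Ha Hb Hc.
  pose proof (T_iso refl0 _ refl0_Orth3 (PSym3_dg a b c Ha Hb Hc)) as E0.
  pose proof (T_iso refl1 _ refl1_Orth3 (PSym3_dg a b c Ha Hb Hc)) as E1.
  rewrite refl0_conj_dg in E0. rewrite refl1_conj_dg in E1.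
  set (M := T (dg a b c)) in *. clearbody M.
  apply mat_ext; intros i j.
  pose proof (f_equal (fun X => X i j) E0) as F0.
  pose proof (f_equal (fun X => X i j) E1) as F1.
  unfold refl0, refl1, dg, mmul, mtr, diag3, sum3 in *.
  destruct i, j; simpl in *; lra.
Qed.

Lemma T_dg_swap01 a b c : 0 < a -> 0 < b -> 0 < c ->
  T (dg b a c) = mmul (mtr swap01) (mmul (T (dg a b c)) swap01).
Proof.
  intros. rewrite <- swap01_conj_dg. apply T_iso; [apply swap01_Orth3 | now apply PSym3_dg].
Qed.

Lemma T_dg_swap12 a b c : 0 < a -> 0 < b -> 0 < c ->
  T (dg a c b) = mmul (mtr swap12) (mmul (T (dg a b c)) swap12).
Proof.
  intros. rewrite <- swap12_conj_dg. apply T_iso; [apply swap12_Orth3 | now apply PSym3_dg].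
Qed.

Lemma T_dg_split a b c : 0 < a -> 0 < b -> 0 < c ->
  T (dg a b c) = madd (T (dg a 1 1)) (madd (T (dg 1 b 1)) (T (dg 1 1 c))).
Proof.
  intros Ha Hb Hc.
  replace (dg a b c) with (mmul (dg a 1 1) (mmul (dg 1 b 1) (dg 1 1 c)))
    by (rewrite !dg_mmul; f_equal; ring).
  rewrite T_add, T_add; try (apply PSym3_dg; lra); rewrite ?dg_mmul.
  - reflexivity.
  - f_equal; ring.
  - apply PSym3_dg; lra.
  - f_equal; ring.
Qed.

Definition T_stretch (i j : I3) (t : R) : R := T (dg (exp t) 1 1) i j.

Lemma T_stretch_additive i j s t : T_stretch i j (s + t) = T_stretch i j s + T_stretch i j t.
Proof.
  unfold T_stretch. rewrite exp_plus.
  replace (dg (exp s * exp t) 1 1) with (mmul (dg (exp s) 1 1) (dg (exp t) 1 1))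
    by (rewrite dg_mmul; f_equal; ring).
  rewrite T_add; try (apply PSym3_dg; try apply exp_pos; lra); [reflexivity|].
  rewrite !dg_mmul; f_equal; ring.
Qed.

Lemma T_stretch_continuous i j x eps : 0 < eps ->
  exists d, 0 < d /\ forall y, Rabs (y - x) < d -> Rabs (T_stretch i j y - T_stretch i j x) < eps.
Proof.
  intros Heps.
  destruct (T_cont (dg (exp x) 1 1) (PSym3_dg _ _ _ (exp_pos x) Rlt_0_1 Rlt_0_1) eps Heps)
    as [d [Hd HTd]].
  assert (Hexp : continuity_pt exp x) by apply derivable_continuous_pt, derivable_pt_exp.
  destruct (Hexp d Hd) as [d' [Hd' Hexpd]].
  exists d'. split; [exact Hd'|]. intros y Hy.
  eapply Rle_lt_trans; [apply entry_le_mdist|]. apply HTd.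
  - apply PSym3_dg; [apply exp_pos | lra | lra].
  - unfold mdist, sum3, dg, diag3; simpl.
    rewrite !Rminus_diag, !Rabs_R0.
    enough (Rabs (exp y - exp x) < d) by lra.
    destruct (Req_dec y x) as [-> | Hyx]; [rewrite Rminus_diag, Rabs_R0; exact Hd|].
    apply (Hexpd y). split; [split; [exact I | auto] | exact Hy].
Qed.

Lemma T_stretch_linear i j t : T_stretch i j t = T_stretch i j 1 * t.
Proof.
  apply additive_continuous_linear.
  - apply T_stretch_additive.
  - apply T_stretch_continuous.
Qed.

Lemma T_dg_exp_1_1 t : T (dg (exp t) 1 1) =
  dg (T_stretch i0 i0 1 * t) (T_stretch i1 i1 1 * t) (T_stretch i1 i1 1 * t).
Proof.
  assert (Hpos := exp_pos t).
  rewrite T_dg_diagonal by lra. fold (T_stretch i0 i0 t) (T_stretch i1 i1 t) (T_stretch i2 i2 t).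
  replace (T_stretch i2 i2 t) with (T_stretch i1 i1 t).
  - now rewrite (T_stretch_linear i0 i0 t), (T_stretch_linear i1 i1 t).
  - unfold T_stretch.
    pose proof (T_dg_swap12 (exp t) 1 1 Hpos Rlt_0_1 Rlt_0_1) as H.
    apply (f_equal (fun X => X i2 i2)) in H.
    unfold mmul, mtr, swap12, sum3 in H; simpl in H. rewrite H; ring.
Qed.

Lemma T_dg_exp x0 x1 x2 : T (dg (exp x0) (exp x1) (exp x2)) =
  iso_lin (T_stretch i0 i0 1 - T_stretch i1 i1 1) (T_stretch i1 i1 1) (dg x0 x1 x2).
Proof.
  assert (P0 := exp_pos x0). assert (P1 := exp_pos x1). assert (P2 := exp_pos x2).
  rewrite T_dg_split by assumption.
  rewrite (T_dg_swap12 1 (exp x2) 1), (T_dg_swap01 (exp x2) 1 1), (T_dg_swap01 (exp x1) 1 1)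
    by lra.
  rewrite !T_dg_exp_1_1, !swap01_conj_dg, swap12_conj_dg.
  unfold iso_lin, dg. mat_ring.
Qed.

Lemma T_diag_iso_lin : exists al be, forall d, (forall i, 0 < d i) ->
  T (diag3 d) = iso_lin al be (diag3 (fun i => ln (d i))).
Proof.
  exists (T_stretch i0 i0 1 - T_stretch i1 i1 1), (T_stretch i1 i1 1).
  intros d Hd.
  replace (diag3 d) with (dg (exp (ln (d i0))) (exp (ln (d i1))) (exp (ln (d i2)))).
  - rewrite T_dg_exp. f_equal. apply mat_ext; intros [] []; reflexivity.
  - rewrite !exp_ln by apply Hd. apply mat_ext; intros [] []; reflexivity.
Qed.

Lemma T_iso_lin_logm al be :
  (forall d, (forall i, 0 < d i) -> T (diag3 d) = iso_lin al be (diag3 (fun i => ln (d i)))) ->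
  forall U, PSym3 U -> T U = iso_lin al be (logm U).
Proof.
  intros Hdiag U HU.
  destruct (logm_spec U HU) as [Q [d [HQ [Hd [-> ->]]]]].
  rewrite T_iso, Hdiag by (try apply PSym3_diag; assumption).
  now apply iso_lin_conj.
Qed.

End Isotropic.

Lemma iso_lin_nondegenerate (T : Mat3 -> Mat3) al be :
  (forall d, (forall i, 0 < d i) -> T (diag3 d) = iso_lin al be (diag3 (fun i => ln (d i)))) ->
  (forall U, PSym3 U -> T U = mzero -> U = mid) ->
  al <> 0 /\ 3 * be + al <> 0.
Proof.
  intros Hdiag Hzero.
  assert (He : 1 < exp 1) by (pose proof (exp_ineq1 1 ltac:(lra)); lra).
  assert (Hnot_mid : forall a b c, dg a b c = mid -> a = 1).
  { intros a b c E. apply (f_equal (fun X => X i0 i0)) in E. exact E. }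
  split; intro H0.
  - assert (Hz : T (dg (exp 1) (exp (-1)) 1) = mzero).
    { unfold dg. rewrite Hdiag by (intros []; [apply exp_pos | apply exp_pos | lra]).
      rewrite H0. unfold iso_lin; apply mat_ext; intros [] [];
        unfold madd, mscal, diag3, trace, mid, mzero; simpl; rewrite ?ln_exp, ?ln_1; ring. }
    apply Hzero, Hnot_mid in Hz; [lra|]. apply PSym3_dg; [apply exp_pos | apply exp_pos | lra].
  - assert (Hz : T (dg (exp 1) (exp 1) (exp 1)) = mzero).
    { unfold dg. rewrite Hdiag by (intros []; apply exp_pos).
      unfold iso_lin; apply mat_ext; intros [] [];
        unfold madd, mscal, diag3, trace, mid, mzero; simpl; rewrite ?ln_exp; lra. }
    apply Hzero, Hnot_mid in Hz; [lra|]. apply PSym3_dg; apply exp_pos.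
Qed.

Theorem mainTheorem9 (T : Mat3 -> Mat3)
  (HSym : forall U, PSym3 U -> Sym3 (T U))
  (Hcont : cont_on_PSym T)
  (Hiso : forall Q U, Orth3 Q -> PSym3 U ->
            T (mmul (mtr Q) (mmul U Q)) = mmul (mtr Q) (mmul (T U) Q))
  (Hzero : forall U, PSym3 U -> (T U = mzero <-> U = mid))
  (Hadd : forall U1 U2, PSym3 U1 -> PSym3 U2 -> mmul U1 U2 = mmul U2 U1 ->
            T (mmul U1 U2) = madd (T U1) (T U2)) :
  (exists G Lam : R, G <> 0 /\ 3 * Lam + 2 * G <> 0 /\
     forall U, PSym3 U ->
       T U = madd (mscal (2 * G) (logm U)) (mscal (Lam * trace (logm U)) mid))
  /\
  (exists G K : R, G <> 0 /\ K <> 0 /\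
     forall U, PSym3 U ->
       T U = madd (mscal (2 * G) (dev3 (logm U))) (mscal (K * trace (logm U)) mid)).
Proof.
  destruct (T_diag_iso_lin T Hcont Hiso Hadd) as [al [be Hdiag]].
  destruct (iso_lin_nondegenerate T al be Hdiag) as [Hal Hbulk].
  { intros U HU. apply (Hzero U HU). }
  pose proof (T_iso_lin_logm T Hiso al be Hdiag) as Hlaw.
  split.
  - exists (al / 2), be. split; [lra|]. split; [lra|].
    intros U HU. rewrite Hlaw by exact HU. unfold iso_lin.
    now replace (2 * (al / 2)) with al by field.
  - exists (al / 2), (be + al / 3). split; [lra|]. split; [lra|].
    intros U HU. rewrite Hlaw by exact HU.
    unfold iso_lin; apply mat_ext; intros [] []; unfold dev3, madd, mscal, mid; simpl; field.
Qed.
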